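(* Let $r\in\{-1,+1\}$ and $\Phi(x,y)=r\phi(x-y)$. For any proper lsc $f:\mathbb R^n\to\overline{\mathbb R}$ and any $\bar x\in\mathbb R^n$ one has $\partial_\Phi f(\bar x)\subseteq\bar x-\nabla\phi^*(r\hat\partial f(\bar x))$. Moreover, the following are equivalent: (a) for every $\bar v\in\partial f(\bar x)$, $f(x)\ge f(\bar x)+r\phi(x-\bar x+\nabla\phi^*(r\bar v))-r\phi(\nabla\phi^*(r\bar v))$ for all $x\in\mathbb R^n$; (b) $\partial_\Phi f(\bar x)=\bar x-\nabla\phi^*(r\partial f(\bar x))$. Under either condition, $\partial f(\bar x)=\hat\partial f(\bar x)$. In particular, if $f$ is a-weakly convex (taking $r=-1$) or a-strongly convex (taking $r=+1$), then $\partial f=\hat\partial f$ and $\operatorname{dom}\partial_\Phi f=\operatorname{dom}\hat\partial f$.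
   Context: Standing assumption: $\phi:\mathbb R^n\to\mathbb R$ is convex, finite-valued, differentiable and strictly convex (Legendre with full domain), super-coercive; $\phi^*$ has the same properties and $\nabla\phi^*=(\nabla\phi)^{-1}$. $\hat\partial f$ is the regular (Fréchet) subdifferential and $\partial f$ the limiting subdifferential. For $\bar x\in\operatorname{dom}f$, $\partial_\Phi f(\bar x)=\{\bar y: f(x)\ge f(\bar x)+\Phi(x,\bar y)-\Phi(\bar x,\bar y)\ \forall x\}$ ($\emptyset$ if $\bar x\notin\operatorname{dom}f$); $\operatorname{dom}T=\{x:T(x)\ne\emptyset\}$. A proper lsc $f$ is a-weakly convex if for every $(\bar x,\bar v)\in\operatorname{graph}\partial f$: $f(x)\ge f(\bar x)-\phi(x-\bar x+\nabla\phi^*(-\bar v))+\phi(\nabla\phi^*(-\bar v))$ for all $x$; a-strongly convex if for every such pair $f(x)\ge f(\bar x)+\phi(x-\bar x+\nabla\phi^*(\bar v))-\phi(\nabla\phi^*(\bar v))$ for all $x$. *)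

From HB Require Import structures.
From mathcomp Require Import all_boot all_order all_algebra.
From mathcomp Require Import all_classical all_reals all_analysis.
Set Implicit Arguments. Unset Strict Implicit. Unset Printing Implicit Defensive.
Import Order.TTheory GRing.Theory Num.Theory.
Import numFieldNormedType.Exports.
Local Open Scope classical_set_scope.
Local Open Scope ring_scope.

Section Defs.
Context {R : realType} {n : nat}.
Notation V := 'rV[R]_n.

Definition dotp (u v : V) : R := \sum_(i < n) u ord0 i * v ord0 i.
Definition enorm (u : V) : R := Num.sqrt (dotp u u).

Definition has_gradient (g : V -> R) (dg : V -> V) :=
  forall x, differentiable g x /\ forall h, 'd g x h = dotp (dg x) h.
Definition strictly_convex (g : V -> R) :=
  forall x y (t : R), x != y -> 0 < t -> t < 1 ->
    g (t *: x + (1 - t) *: y) < t * g x + (1 - t) * g y.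
Definition super_coercive (g : V -> R) :=
  forall M : R, exists K : R, forall x, K < enorm x -> M * enorm x <= g x.
Definition is_conjugate (g gs : V -> R) :=
  forall y, (forall x, dotp x y - g x <= gs y) /\
            (forall e : R, 0 < e -> exists x, gs y - e < dotp x y - g x).
Definition legendre_pair (phi : V -> R) (gphi : V -> V)
    (phis : V -> R) (gphis : V -> V) :=
  [/\ has_gradient phi gphi, strictly_convex phi, super_coercive phi,
      is_conjugate phi phis &
      [/\ has_gradient phis gphis, strictly_convex phis, super_coercive phis,
          cancel gphi gphis & cancel gphis gphi]].

Local Open Scope ereal_scope.

Definition proper_fun (f : V -> \bar R) :=
  (forall x, f x != -oo) /\ (exists x, f x \is a fin_num).

Definition frechet_subdiff (f : V -> \bar R) (xb : V) : set V :=
  [set v | f xb \is a fin_num /\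
     forall e : R, (0 < e)%R -> exists2 d : R, (0 < d)%R &
       forall x, (enorm (x - xb) < d)%R ->
         f xb + (dotp v (x - xb) - e * enorm (x - xb))%:E <= f x].

Definition limiting_subdiff (f : V -> \bar R) (xb : V) : set V :=
  [set v | f xb \is a fin_num /\
     exists (xk vk : nat -> V),
       [/\ xk @ \oo --> xb, (fun k => f (xk k)) @ \oo --> f xb,
           vk @ \oo --> v & forall k, frechet_subdiff f (xk k) (vk k)]].

Definition Phi_subdiff (phi : V -> R) (r : R) (f : V -> \bar R) (xb : V) : set V :=
  [set y | f xb \is a fin_num /\
     forall x, f xb + (r * phi (x - y) - r * phi (xb - y))%:E <= f x].

Definition dom_map (T : V -> set V) : set V := [set x | T x !=set0].

Definition a_weakly_convex (phi : V -> R) (gphis : V -> V) (f : V -> \bar R) :=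
  forall xb vb, limiting_subdiff f xb vb -> forall x,
    f xb + (- phi (x - xb + gphis (- vb)) + phi (gphis (- vb)))%:E <= f x.

Definition a_strongly_convex (phi : V -> R) (gphis : V -> V) (f : V -> \bar R) :=
  forall xb vb, limiting_subdiff f xb vb -> forall x,
    f xb + (phi (x - xb + gphis vb) - phi (gphis vb))%:E <= f x.

End Defs.

(* A Phi-subgradient y of f at xb makes the smooth function x |-> f xb + r (phi (x - y) - phi (xb - y))
   a global minorant of f touching it at xb; comparing first-order expansions gives the regular
   subgradient v = r gphi (xb - y), i.e. y = xb - gphis (r v).  Conversely, condition (a) for a limiting
   subgradient v says exactly that xb - gphis (r v) is a Phi-subgradient, which is therefore also
   regular.  Weak (r = -1) and strong (r = 1) convexity are condition (a) at every point. *)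
From HB Require Import structures.
From mathcomp Require Import all_boot all_order all_algebra.
From mathcomp Require Import all_classical all_reals all_analysis.
From mathcomp Require Import lra.
Set Implicit Arguments. Unset Strict Implicit. Unset Printing Implicit Defensive.
Import Order.TTheory GRing.Theory Num.Theory.
Import numFieldNormedType.Exports.
Local Open Scope classical_set_scope.
Local Open Scope ring_scope.

Section EuclideanNorm.
Context {R : realType} {n : nat}.
Notation V := 'rV[R]_n.

Lemma sqr_coord_le_dotp (u : V) i : u ord0 i ^+ 2 <= dotp u u.
Proof.
rewrite /dotp (bigD1 i) //= -expr2 lerDl.
by apply: sumr_ge0 => j _; rewrite -expr2 sqr_ge0.
Qed.

Lemma mx_norm_le_enorm (h : V) : `|h| <= enorm h.
Proof.
change (mx_norm h <= enorm h); rewrite mx_normrE.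
apply: bigmax_le => [|[i j] _ /=]; first exact: sqrtr_ge0.
rewrite (ord1 i) -sqrtr_sqr /enorm ler_sqrt ?sqr_coord_le_dotp //.
exact: le_trans (sqr_ge0 _) (sqr_coord_le_dotp h j).
Qed.

Lemma dotpZl (a : R) (u h : V) : dotp (a *: u) h = a * dotp u h.
Proof. by rewrite /dotp mulr_sumr; apply: eq_bigr => i _; rewrite mxE mulrA. Qed.

Lemma has_gradient_approx {g : V -> R} {dg : V -> V} : has_gradient g dg ->
  forall z (e : R), 0 < e -> exists2 d : R, 0 < d & forall h : V, enorm h < d ->
    `|g (z + h) - g z - dotp (dg z) h| <= e * enorm h.
Proof.
move=> gG z e e0; have [dz dgE] := gG z.
have /eqaddoP/(_ e e0)/nbhs_norm0P[d /= d0 small] := diff_locally dz.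
exists d => // h hd.
have := small h (le_lt_trans (mx_norm_le_enorm h) hd).
rewrite -dgE !fctE /= [h + z]addrC opprD addrA => /le_trans; apply.
by rewrite ler_pM2l ?mx_norm_le_enorm.
Qed.

End EuclideanNorm.

Section PhiSubdifferential.
Context {R : realType} {n : nat}.
Notation V := 'rV[R]_n.

Lemma frechet_limiting_subdiff (f : V -> \bar R) xb :
  frechet_subdiff f xb `<=` limiting_subdiff f xb.
Proof.
move=> v [fin_fxb vP]; split=> //.
by exists (fun=> xb), (fun=> v); split=> //; exact: cvg_cst.
Qed.

Variables (phi : V -> R) (gphi gphis : V -> V) (r : R).
Hypotheses (phiG : has_gradient phi gphi) (r_sign : r = 1 \/ r = -1).
Hypotheses (gphiK : cancel gphi gphis) (gphisK : cancel gphis gphi).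

Definition limiting_Phi_minorant (f : V -> \bar R) (xb : V) :=
  forall vb, limiting_subdiff f xb vb -> forall x,
    (f xb + (r * phi (x - xb + gphis (r *: vb)) - r * phi (gphis (r *: vb)))%:E <= f x)%E.

Lemma signZK (v : V) : r *: (r *: v) = v.
Proof. by rewrite scalerA; case: r_sign => ->; rewrite ?mulrNN mulr1 scale1r. Qed.

Lemma Phi_subdiff_frechet (f : V -> \bar R) xb y :
  Phi_subdiff phi r f xb y -> frechet_subdiff f xb (r *: gphi (xb - y)).
Proof.
move=> [fin_fxb minor]; split=> // e e0.
have [d d0 approx] := has_gradient_approx phiG (xb - y) e0.
exists d => // x hx; apply: le_trans (minor x); rewrite leeD2l // lee_fin dotpZl.
have := approx _ hx; rewrite [xb - y + _]addrC addrA subrK.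
set a := phi (x - y); set b := phi (xb - y); set c := dotp _ _; set k := enorm _.
by rewrite ler_norml => /andP[lo hi]; case: r_sign => ->; lra.
Qed.

Lemma Phi_subdiff_shiftE (f : V -> \bar R) xb w :
  Phi_subdiff phi r f xb (xb - w) <->
  f xb \is a fin_num /\
  forall x, (f xb + (r * phi (x - xb + w) - r * phi w)%:E <= f x)%E.
Proof.
have wE : xb - (xb - w) = w by rewrite opprB addrCA subrr addr0.
have xE x : x - (xb - w) = x - xb + w by rewrite opprB addrCA addrC.
rewrite /Phi_subdiff /= wE.
by split=> -[fin_fxb minor]; split=> // x; [rewrite -xE | rewrite xE]; exact: minor.
Qed.

Lemma Phi_subdiff_sub_frechet_image (f : V -> \bar R) xb :
  Phi_subdiff phi r f xb `<=` (fun v => xb - gphis (r *: v)) @` frechet_subdiff f xb.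
Proof.
move=> y yP; exists (r *: gphi (xb - y)); first exact: Phi_subdiff_frechet.
by rewrite signZK gphiK opprB addrCA subrr addr0.
Qed.

Lemma Phi_subdiff_image_frechet (f : V -> \bar R) xb v :
  Phi_subdiff phi r f xb (xb - gphis (r *: v)) -> frechet_subdiff f xb v.
Proof. by move/Phi_subdiff_frechet; rewrite opprB addrC subrK gphisK signZK. Qed.

Lemma limiting_Phi_minorant_Phi_subdiff (f : V -> \bar R) xb v :
  limiting_Phi_minorant f xb -> limiting_subdiff f xb v ->
  Phi_subdiff phi r f xb (xb - gphis (r *: v)).
Proof. by move=> minor vP; apply/Phi_subdiff_shiftE; split; [case: vP | exact: minor]. Qed.

Lemma limiting_Phi_minorantP (f : V -> \bar R) xb :
  limiting_Phi_minorant f xb <->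
  Phi_subdiff phi r f xb = (fun v => xb - gphis (r *: v)) @` limiting_subdiff f xb.
Proof.
split=> [minor | PhiE v vP].
  apply/seteqP; split=> [y /Phi_subdiff_sub_frechet_image [v vP <-] | _ [v vP <-]].
    by exists v => //; exact: frechet_limiting_subdiff.
  exact: limiting_Phi_minorant_Phi_subdiff.
have : Phi_subdiff phi r f xb (xb - gphis (r *: v)) by rewrite PhiE; exists v.
by case/Phi_subdiff_shiftE.
Qed.

Lemma limiting_Phi_minorant_frechet (f : V -> \bar R) xb :
  limiting_Phi_minorant f xb -> limiting_subdiff f xb = frechet_subdiff f xb.
Proof.
move=> minor; apply/seteqP; split=> [v vP|]; last exact: frechet_limiting_subdiff.
exact/Phi_subdiff_image_frechet/limiting_Phi_minorant_Phi_subdiff.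
Qed.

Lemma dom_Phi_subdiff (f : V -> \bar R) :
  (forall xb, limiting_Phi_minorant f xb) ->
  dom_map (Phi_subdiff phi r f) = dom_map (frechet_subdiff f).
Proof.
move=> minor; apply/seteqP; split=> xb [y yP].
  by have [v vP _] := Phi_subdiff_sub_frechet_image yP; exists v.
exists (xb - gphis (r *: y)).
exact/limiting_Phi_minorant_Phi_subdiff/frechet_limiting_subdiff.
Qed.

End PhiSubdifferential.

Lemma weakly_convex_Phi_minorant {R : realType} {n : nat} (phi : 'rV[R]_n -> R) gphis f xb :
  a_weakly_convex phi gphis f -> limiting_Phi_minorant phi gphis (-1) f xb.
Proof. by move=> wcvx v vP x; rewrite scaleN1r !mulN1r opprK; exact: wcvx. Qed.

Lemma strongly_convex_Phi_minorant {R : realType} {n : nat} (phi : 'rV[R]_n -> R) gphis f xb :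
  a_strongly_convex phi gphis f -> limiting_Phi_minorant phi gphis 1 f xb.
Proof. by move=> scvx v vP x; rewrite scale1r !mul1r; exact: scvx. Qed.

Theorem mainTheorem8 (R : realType) (n : nat)
    (phi phis : 'rV[R]_n -> R) (gphi gphis : 'rV[R]_n -> 'rV[R]_n)
    (r : R) (f : 'rV[R]_n -> \bar R) :
  legendre_pair phi gphi phis gphis ->
  (r = 1 \/ r = -1) ->
  proper_fun f -> lower_semicontinuous f ->
  let condA xb := forall vb, limiting_subdiff f xb vb -> forall x,
      (f xb + (r * phi (x - xb + gphis (r *: vb))
               - r * phi (gphis (r *: vb)))%:E <= f x)%E in
  let condB xb := Phi_subdiff phi r f xb =
      (fun v => xb - gphis (r *: v)) @` limiting_subdiff f xb in
  (forall xb, Phi_subdiff phi r f xb `<=`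
      (fun v => xb - gphis (r *: v)) @` frechet_subdiff f xb) /\
  (forall xb, condA xb <-> condB xb) /\
  (forall xb, condA xb \/ condB xb ->
      limiting_subdiff f xb = frechet_subdiff f xb) /\
  ((r = -1 /\ a_weakly_convex phi gphis f) \/
   (r = 1 /\ a_strongly_convex phi gphis f) ->
     (forall x, limiting_subdiff f x = frechet_subdiff f x) /\
     dom_map (Phi_subdiff phi r f) = dom_map (frechet_subdiff f)).
Proof.
move=> [phiG _ _ _ [_ _ _ gphiK gphisK]] r_sign _ _ condA condB.
have minorP := limiting_Phi_minorantP phiG r_sign gphiK f.
have minor_frechet := limiting_Phi_minorant_frechet phiG r_sign gphisK (f := f).
split=> [xb|]; first exact: Phi_subdiff_sub_frechet_image.
split; first exact: minorP.
split; first by move=> xb [A|/minorP A]; exact: minor_frechet A.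
move=> cvx; have minor xb : limiting_Phi_minorant phi gphis r f xb.
  case: cvx => -[r1 cvx]; subst r.
  - exact: weakly_convex_Phi_minorant cvx.
  - exact: strongly_convex_Phi_minorant cvx.
split=> [x|]; first exact: minor_frechet (minor x).
exact: dom_Phi_subdiff phiG r_sign gphiK _ minor.
Qed.
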